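(* Let $\mathcal{X}$ be a countable set, $\mathcal{D}$ a distribution on $\mathcal{X}\times\{0,1\}$, $\alpha,\epsilon>0$, and let $(f_1,f_2)$ be a pair of models output by Reconcile$(f_1^0,f_2^0,\alpha,\epsilon,\mathcal{D})$ for some models $f_1^0,f_2^0:\mathcal{X}\to[0,1]$. Let $E\subseteq\mathcal{X}$ with $\mu(E)>0$ and let $p_j(E)=\mathbb{E}_{(x,y)\sim\mathcal{D}}[f_j(x)\mid x\in E]$ for $j=1,2$. Then $$|p_1(E)-p_2(E)|\le\frac{\alpha}{\mu(E)}+\epsilon.$$
   Context: $\mu(S)=\Pr_{(x,y)\sim\mathcal{D}}[x\in S]$. Brier score $B(f,\mathcal{D})=\mathbb{E}[(f(x)-y)^2]$. $U_\epsilon(f_1,f_2)=\{x:|f_1(x)-f_2(x)|>\epsilon\}$, $U^>_\epsilon$, $U^<_\epsilon$ its subsets where $f_1>f_2$, resp. $f_1<f_2$. Patch: $h(x,f;g,\Delta)=f(x)+\Delta$ if $g(x)=1$, else $f(x)$. $\mathrm{Round}(v;m)$ is a closest point to $v$ in $\{k/m:k\in\mathbb{Z},-m\le k\le m\}$. Algorithm Reconcile$(f_1,f_2,\alpha,\epsilon,\mathcal{D})$: set $m=\lceil \frac{2}{\sqrt{\alpha}\epsilon}\rceil$, $t_1=t_2=0$, $f_1^0=f_1$, $f_2^0=f_2$. While $\mu(U_\epsilon(f_1^{t_1},f_2^{t_2}))\ge\alpha$: for each $\bullet\in\{>,<\}$, $i\in\{1,2\}$ let $v_*^\bullet=\mathbb{E}[y\mid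 x\in U^\bullet_\epsilon(f_1^{t_1},f_2^{t_2})]$, $v_i^\bullet=\mathbb{E}[f_i^{t_i}(x)\mid x\in U^\bullet_\epsilon(f_1^{t_1},f_2^{t_2})]$; choose $(i,\bullet)$ maximizing $\mu(U^\bullet_\epsilon(f_1^{t_1},f_2^{t_2}))(v_*^\bullet-v_i^\bullet)^2$ (product $0$ for mass-zero sets; ties arbitrary); let $g$ be the indicator of that set, $\tilde\Delta=\mathbb{E}[y\mid g=1]-\mathbb{E}[f_i^{t_i}(x)\mid g=1]$, $\Delta=\mathrm{Round}(\tilde\Delta;m)$; set $f_i^{t_i+1}=h(\cdot,f_i^{t_i};g,\Delta)$ and increment $t_i$. On exit, output $(f_1^{t_1},f_2^{t_2})$. *)

From mathcomp Require Import all_boot all_order all_algebra.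
From mathcomp Require Import all_classical all_reals all_analysis.
Set Implicit Arguments. Unset Strict Implicit. Unset Printing Implicit Defensive.
Import Order.TTheory GRing.Theory Num.Theory.
Local Open Scope classical_set_scope.
Local Open Scope ring_scope.

Section Reconcile.
Context {R : realType} {d : measure_display} {X : measurableType d}.
(* D : a distribution on X x {0,1}; the label y is the boolean z.2 *)
Variable P : probability (X * bool)%type R.

Definition mu (S : set X) : R := fine (P (S `*` setT)).

(* E[h(x,y) | x in S]  (MathComp convention r / 0 = 0 when mu(S) = 0) *)
Definition condE (S : set X) (h : X * bool -> R) : R :=
  Rintegral P (S `*` setT) h / mu S.

Definition pE (f : X -> R) (S : set X) : R := condE S (fun z => f z.1).
Definition ycond (S : set X) : R := condE S (fun z => (z.2)%:R).

Definition U (eps : R) (f1 f2 : X -> R) : set X := [set x | eps < `|f1 x - f2 x|].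
Definition Ugt (eps : R) (f1 f2 : X -> R) : set X := [set x | eps < `|f1 x - f2 x| /\ f2 x < f1 x].
Definition Ult (eps : R) (f1 f2 : X -> R) : set X := [set x | eps < `|f1 x - f2 x| /\ f1 x < f2 x].

(* the patch h(x, f; g, Delta), with g the indicator of S *)
Definition patch (f : X -> R) (S : set X) (Delta : R) : X -> R :=
  fun x => if `[< S x >] then f x + Delta else f x.

Definition is_round (v : R) (m : int) (r : R) : Prop :=
  exists k : int, [/\ - m <= k <= m, r = k%:~R / m%:~R &
    forall k' : int, - m <= k' <= m -> `|v - r| <= `|v - k'%:~R / m%:~R| ].

Definition m_param (alpha eps : R) : int := Num.ceil (2 / (Num.sqrt alpha * eps)).

Definition Ub (eps : R) (b : bool) (f1 f2 : X -> R) : set X :=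
  if b then Ugt eps f1 f2 else Ult eps f1 f2.

Definition pick (i : bool) (f1 f2 : X -> R) : X -> R := if i then f1 else f2.

Definition score (eps : R) (f1 f2 : X -> R) (i b : bool) : R :=
  let S := Ub eps b f1 f2 in
  if mu S == 0 then 0 else mu S * (ycond S - pE (pick i f1 f2) S) ^+ 2.

(* One iteration of the while loop of Reconcile(., ., alpha, eps, D),
   nondeterministic in the tie-breaking of the argmax and of Round. *)
Definition reconcile_step (alpha eps : R) (st st' : (X -> R) * (X -> R)) : Prop :=
  let f1 := st.1 in let f2 := st.2 in
  alpha <= mu (U eps f1 f2) /\
  exists (i b : bool) (Delta : R),
    [/\ forall i' b', score eps f1 f2 i' b' <= score eps f1 f2 i b,
        is_round (ycond (Ub eps b f1 f2) - pE (pick i f1 f2) (Ub eps b f1 f2))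
                 (m_param alpha eps) Delta &
        st' = (if i then (patch f1 (Ub eps b f1 f2) Delta, f2)
               else (f1, patch f2 (Ub eps b f1 f2) Delta))].

Inductive reconcile_run (alpha eps : R) :
  (X -> R) * (X -> R) -> (X -> R) * (X -> R) -> Prop :=
| run_refl st : reconcile_run alpha eps st st
| run_step st st' st'' : reconcile_step alpha eps st st' ->
    reconcile_run alpha eps st' st'' -> reconcile_run alpha eps st st''.

Definition reconcile_output (alpha eps : R) (f1 f2 g1 g2 : X -> R) : Prop :=
  reconcile_run alpha eps (f1, f2) (g1, g2) /\ mu (U eps g1 g2) < alpha.

End Reconcile.

From Pilot Require Import Defs.
From mathcomp Require Import all_boot all_order all_algebra.
From mathcomp Require Import all_classical all_reals all_analysis.
From mathcomp Require Import lra.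
Set Implicit Arguments. Unset Strict Implicit. Unset Printing Implicit Defensive.
Import Order.TTheory GRing.Theory Num.Theory.
Local Open Scope classical_set_scope.
Local Open Scope ring_scope.

(** Reconcile keeps [|f1 - f2| <= 1] everywhere. On [U^>] the model with the
larger conditional mean is [f1] (and [f2] on [U^<]); the argmax rule patches the
model whose conditional mean is farther from [E[y | U^b]], so the patch moves it
towards the other model, by at most [1] since [Round] takes values in [[-1, 1]].
For the output pair, [|p1(E) - p2(E)| <= E[|f1 - f2| | E]], and [|f1 - f2|] is
at most [1] on [U_eps] and at most [eps] off it, while [mu(U_eps) < alpha]. *)

Lemma normD_le1_opposite_signs (R : realDomainType) (a c : R) :
  `|a| <= 1 -> `|c| <= 1 -> a * c <= 0 -> `|a + c| <= 1.
Proof.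
rewrite !ler_norml => /andP[? ?] /andP[? ?] ac.
by apply/andP; split; nra.
Qed.

Lemma is_round_bounds (R : realType) (v : R) (m : int) (r : R) :
  0 < m -> is_round v m r -> [/\ `|r| <= 1, (v <= 0 -> r <= 0) & (0 <= v -> 0 <= r)].
Proof.
move=> m_gt0 [k [/andP[mk km] -> closest]].
have m_gt0R : 0 < (m%:~R : R) by rewrite ltr0z.
(* [0 = 0 / m] is a grid point, so [r] cannot lie strictly across [0] from [v]. *)
have le_norm_v : `|v - k%:~R / m%:~R| <= `|v|.
  have := closest 0; rewrite mul0r subr0; apply.
  by rewrite oppr_le0 ltW.
have mkR : - (m%:~R : R) <= k%:~R by rewrite -mulrNz ler_int.
have kmR : (k%:~R : R) <= m%:~R by rewrite ler_int.
split.
- by rewrite ler_norml ler_pdivlMr // ler_pdivrMr // mul1r mulN1r mkR.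
- move=> v_le0; rewrite leNgt; apply/negP => r_gt0.
  by move: le_norm_v; rewrite (ler0_norm v_le0) ltr0_norm; lra.
- move=> v_ge0; rewrite leNgt; apply/negP => r_lt0.
  by move: le_norm_v; rewrite (ger0_norm v_ge0) gtr0_norm; lra.
Qed.

Lemma m_param_gt0 (R : realType) (alpha eps : R) :
  0 < alpha -> 0 < eps -> 0 < m_param alpha eps.
Proof.
by move=> a_gt0 e_gt0; rewrite /m_param ceil_gt0 divr_gt0 // mulr_gt0 // sqrtr_gt0.
Qed.

Definition bounded (T : Type) (R : numDomainType) (g : T -> R) :=
  exists M, forall x, `|g x| <= M.

Lemma boundedB (T : Type) (R : numDomainType) (f g : T -> R) :
  bounded f -> bounded g -> bounded (fun x => f x - g x).
Proof.
move=> [M fM] [N gN]; exists (M + N) => x.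
by apply: le_trans (ler_normB _ _) _; apply: lerD.
Qed.

Section DiscreteSpace.
Variables (R : realType) (d : measure_display) (X : measurableType d).
Hypothesis measurable_all : forall A : set X, measurable A.
Variable P : probability (X * bool)%type R.

Let measurable_cyl (S : set X) : measurable (S `*` [set: bool]) :=
  measurableX (measurable_all S) measurableT.

Lemma mu_ge0 (S : set X) : 0 <= mu P S.
Proof. exact: fine_ge0. Qed.

Lemma condE_mu0 (S : set X) (h : X * bool -> R) : mu P S = 0 -> condE P S h = 0.
Proof. by rewrite /condE => ->; rewrite invr0 mulr0. Qed.

Lemma integrable_fst (g : X -> R) (S : set X) :
  bounded g -> P.-integrable (S `*` setT) (EFin \o (fun z => g z.1)).
Proof.
move=> [M gM]; apply: measurable_bounded_integrable => //.
- by rewrite -ge0_fin_numE // fin_num_measure.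
- apply: measurableT_comp; last exact: measurable_funS measurable_fst.
  by move=> _ Y _; exact: measurable_all.
- exists M; split; first exact: num_real.
  by move=> M' M'M z _; exact: le_trans (gM z.1) (ltW M'M).
Qed.

Lemma pEB (f g : X -> R) (S : set X) : bounded f -> bounded g ->
  pE P f S - pE P g S = condE P S (fun z => f z.1 - g z.1).
Proof.
move=> bf bg; rewrite /pE /condE -mulrBl.
by rewrite -(RintegralB (measurable_cyl S) (integrable_fst S bf) (integrable_fst S bg)).
Qed.

Lemma pE_lt (f g : X -> R) (c : R) (S : set X) : bounded f -> bounded g ->
  0 < c -> 0 < mu P S -> (forall x, S x -> c + g x <= f x) -> pE P g S < pE P f S.
Proof.
move=> bf bg c_gt0 mu_gt0 gap.
rewrite -subr_gt0 pEB // /condE pmulr_lgt0 ?invr_gt0 //.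
apply: lt_le_trans (_ : 0 < c * mu P S) _; first exact: mulr_gt0.
rewrite -Rintegral_cst //; apply: le_Rintegral => //.
- by apply: (integrable_fst (g := fun=> c)); exists `|c|.
- by apply: (integrable_fst (g := fun x => f x - g x)); exact: boundedB.
- by move=> z [Sz _]; rewrite lerBrDr; exact: gap.
Qed.

Lemma Rintegral_indic_fst_le (A E : set X) :
  Rintegral P (E `*` setT) (fun z => \1_A z.1) <= mu P A.
Proof.
have -> : (fun z : X * bool => \1_A z.1 : R) = \1_(A `*` setT).
  by apply/funext => z; rewrite !indicE in_setX in_setT andbT.
rewrite /Rintegral integral_indic // /mu fine_le ?fin_num_measure //;
  try exact: measurableI.
by apply: le_measure; rewrite ?inE //; exact: measurableI.
Qed.

Lemma norm_condE_le (g : X -> R) (A E : set X) (eps : R) :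
  0 <= eps -> 0 < mu P E -> (forall x, `|g x| <= 1) ->
  (forall x, ~ A x -> `|g x| <= eps) ->
  `|condE P E (fun z => g z.1)| <= mu P A / mu P E + eps.
Proof.
move=> e_ge0 mu_gt0 g1 g_eps.
rewrite /condE normrM normfV (gtr0_norm mu_gt0) ler_pdivrMr // mulrDl divfK ?gt_eqF //.
have b1A : bounded (\1_A : X -> R).
  by exists 1 => x; rewrite indicE; case: (_ \in _); rewrite ?normr1 ?normr0.
have bA : bounded (fun x => \1_A x + eps).
  have [M AM] := b1A; exists (M + `|eps|) => x.
  by apply: le_trans (ler_normD _ _) _; rewrite lerD2r.
have bg : bounded g by exists 1.
have bg_norm : bounded (fun x => `|g x|) by exists 1 => x; rewrite normr_id.
have mE := measurable_cyl E.
apply: le_trans (le_normr_Rintegral mE (integrable_fst E bg)) _.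
apply: le_trans (le_Rintegral mE (integrable_fst E bg_norm) (integrable_fst E bA) _) _.
  move=> z _; rewrite indicE; case: (boolP (z.1 \in A)) => [_ | /negP zA].
    by apply: le_trans (g1 _) _; rewrite lerDl.
  by rewrite add0r; apply: g_eps => Az; apply: zA; rewrite in_setE.
rewrite RintegralD //; last 2 first.
- exact: integrable_fst.
- by apply: (integrable_fst (g := fun=> eps)); exists `|eps|.
by rewrite Rintegral_cst // lerD2r Rintegral_indic_fst_le.
Qed.

Definition close_models (g1 g2 : X -> R) :=
  [/\ forall x, `|g1 x - g2 x| <= 1, bounded g1 & bounded g2].

Lemma unit_interval_close (f1 f2 : X -> R) :
  (forall x, 0 <= f1 x <= 1) -> (forall x, 0 <= f2 x <= 1) -> close_models f1 f2.
Proof.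
move=> f1_01 f2_01; split.
- by move=> x; rewrite ler_norml; have := f1_01 x; have := f2_01 x; lra.
- by exists 1 => x; rewrite ger0_norm; have := f1_01 x; lra.
- by exists 1 => x; rewrite ger0_norm; have := f2_01 x; lra.
Qed.

Lemma patch_bounded (f : X -> R) (S : set X) (D : R) :
  bounded f -> bounded (Defs.patch f S D).
Proof.
move=> [M fM]; exists (M + `|D|) => x; rewrite /Defs.patch; case: asboolP => _.
  by apply: le_trans (ler_normD _ _) _; rewrite lerD2r.
by apply: le_trans (fM x) _; rewrite lerDl.
Qed.

Lemma Ub_gap (eps : R) (b : bool) (f1 f2 : X -> R) (x : X) :
  Ub eps b f1 f2 x -> eps + Defs.pick (~~ b) f1 f2 x <= Defs.pick b f1 f2 x.
Proof.
case: b => -[/= far lt]; move: far.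
- by rewrite gtr0_norm ?subr_gt0 //; lra.
- by rewrite ltr0_norm ?subr_lt0 //; lra.
Qed.

Lemma score_argmax_sign (eps : R) (f1 f2 : X -> R) (i b : bool) :
  0 < eps -> bounded f1 -> bounded f2 ->
  (forall i' b', score P eps f1 f2 i' b' <= score P eps f1 f2 i b) ->
  let S := Ub eps b f1 f2 in
  let v := ycond P S - pE P (Defs.pick i f1 f2) S in
  if i == b then (v <= 0 : Prop) else (0 <= v : Prop).
Proof.
move=> e_gt0 b1 b2 argmax S v; rewrite {}/v.
have [mu0 | mu_neq0] := eqVneq (mu P S) 0.
  by rewrite /ycond /pE !condE_mu0 // subrr; case: ifP.
have mu_gt0 : 0 < mu P S by rewrite lt_neqAle eq_sym mu_neq0 mu_ge0.
have bpick j : bounded (Defs.pick j f1 f2) by case: j.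
have gap : pE P (Defs.pick (~~ b) f1 f2) S < pE P (Defs.pick b f1 f2) S.
  by apply: (pE_lt _ _ e_gt0 mu_gt0) => // x; exact: Ub_gap.
(* The chosen model is the one farther from [ycond P S]. *)
have := argmax (~~ i) b; rewrite /score -/S (negPf mu_neq0) ler_pM2l // => farther.
case: eqP => [ib | /eqP]; first by subst i; nra.
by rewrite negb_eqb => /addbP nib; move: gap; rewrite -nib negbK => gap; nra.
Qed.

Lemma reconcile_step_close (alpha eps : R) st st' : 0 < alpha -> 0 < eps ->
  reconcile_step P alpha eps st st' -> close_models st.1 st.2 -> close_models st'.1 st'.2.
Proof.
move=> a_gt0 e_gt0.
case: st => f1 f2 [_ [i [b [D [argmax round ->]]]]] [close12 b1 b2] /=.
have [D1 D_le0 D_ge0] := is_round_bounds (m_param_gt0 a_gt0 e_gt0) round.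
have {argmax round D_le0 D_ge0}D_sign : if i == b then D <= 0 else 0 <= D.
  have := score_argmax_sign e_gt0 b1 b2 argmax.
  by case: (i == b) => [/D_le0 | /D_ge0].
have {D_sign}opposite x :
    Ub eps b f1 f2 x -> (f1 x - f2 x) * (if i then D else - D) <= 0.
  by case: b D_sign => D_sign [_ lt]; case: i D_sign => /= D_sign; nra.
case: i opposite => /= opposite; split => //; try exact: patch_bounded.
- move=> x; rewrite /Defs.patch; case: asboolP => Sx; last exact: close12.
  by rewrite addrAC; apply: normD_le1_opposite_signs => //; exact: opposite.
- move=> x; rewrite /Defs.patch; case: asboolP => Sx; last exact: close12.
  rewrite opprD addrA; apply: normD_le1_opposite_signs; rewrite ?normrN //.
  exact: opposite.
Qed.

Lemma reconcile_run_close (alpha eps : R) st st' : 0 < alpha -> 0 < eps ->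
  reconcile_run P alpha eps st st' -> close_models st.1 st.2 -> close_models st'.1 st'.2.
Proof.
move=> a_gt0 e_gt0.
by elim=> // s s' s'' /(reconcile_step_close a_gt0 e_gt0) step _ IH /step.
Qed.

End DiscreteSpace.

Theorem corollary1 (R : realType) (d : measure_display) (X : measurableType d)
  (Xcount : countable [set: X])
  (Xdiscrete : forall A : set X, measurable A)
  (P : probability (X * bool)%type R)
  (alpha eps : R) (halpha : 0 < alpha) (heps : 0 < eps)
  (f10 f20 : X -> R)
  (hf10 : forall x, 0 <= f10 x <= 1) (hf20 : forall x, 0 <= f20 x <= 1)
  (f1 f2 : X -> R)
  (hout : reconcile_output P alpha eps f10 f20 f1 f2)
  (E : set X) (hE : 0 < mu P E) :
  `|pE P f1 E - pE P f2 E| <= alpha / mu P E + eps.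
Proof.
have [run U_lt] := hout.
have [close12 b1 b2] :=
  reconcile_run_close Xdiscrete halpha heps run (unit_interval_close hf10 hf20).
rewrite (pEB Xdiscrete) //.
apply: le_trans (norm_condE_le Xdiscrete (A := U eps f1 f2) (ltW heps) hE close12 _) _.
  by move=> x /negP; rewrite -leNgt.
by rewrite lerD2r ler_pM2r ?invr_gt0 // ltW.
Qed.
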